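(* Let $\beta_1,\dots,\beta_T\in(0,1)$ be a variance schedule, $\alpha_t:=1-\beta_t$, $\bar\alpha_t:=\prod_{s=1}^t\alpha_s$, and $S(z_0,\varepsilon,t):=\sqrt{\bar\alpha_t}\,z_0+\sqrt{1-\bar\alpha_t}\,\varepsilon$. Let $\varepsilon_\theta(z_t,c_{\mathrm{text}},c_{\mathrm{img}})$ be a conditional noise-prediction network with generation function $G(z_t,c_{\mathrm{text}},c_{\mathrm{img}}):=[z_t-\sqrt{1-\bar\alpha_t}\,\varepsilon_\theta(z_t,c_{\mathrm{text}},c_{\mathrm{img}})]/\sqrt{\bar\alpha_t}$, and let $\varepsilon^*_\theta(z_t,c_{\mathrm{text}})$ be the noise-prediction network of a fixed pre-trained text-guided latent diffusion model. Let $P(z_0,c_{\mathrm{text}})$ be a likelihood function that image $z_0$ lies in the data distribution specified by text condition $c_{\mathrm{text}}$, and assume (domain smoothness) that for every text condition $P(\cdot,c_{\mathrm{text}})$ is $L$-Lipschitz for some $L<\infty$: $|P(z^1_0,c_{\mathrm{text}})-P(z^2_0,c_{\mathrm{text}})|\le L\|z^1_0-z^2_0\|_2$. Let $c_y$ be the target text condition, $x_0$ a source image, $\varepsilon_x\sim\mathcal N(0,\mathbf I)$, and $x_t=S(x_0,\varepsilon_x,t)$. Define $$\mathcal L_{\mathrm{LDM}}=-\mathbb E_{x_0,\varepsilon_x}\,P\big[G(S(x_0,\varepsilon_x,t),c_y,x_0),c_y\big].$$ Then $$\mathcal L_{\mathrm{LDM}}\le \mathcal L_{\mathrm{self}}:=\mathbb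 E_{x_0,\varepsilon_x}\Big[L\sqrt{\tfrac{1-\bar\alpha_t}{\bar\alpha_t}}\,\big\|\varepsilon_\theta(x_t,c_y,x_0)-\varepsilon^*_\theta(x_t,c_y)\big\|_2\Big]+\mathrm{const},$$ where $\mathrm{const}$ is a quantity not depending on the network $\varepsilon_\theta$ (it depends only on the pre-trained model and $P$).
   Context: Setting: latent diffusion models for unpaired image-to-image translation from a source domain $\mathcal X$ to a target domain $\mathcal Y$ specified by the text condition $c_y$; the time-step dependence of the networks is suppressed in notation. *)

From HB Require Import structures.
From mathcomp Require Import all_boot all_order all_algebra.
From mathcomp Require Import all_classical all_reals all_analysis.
From mathcomp Require Import normal_distribution.
Set Implicit Arguments. Unset Strict Implicit. Unset Printing Implicit Defensive.
Import Order.TTheory GRing.Theory Num.Theory.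
Local Open Scope ring_scope.
Local Open Scope classical_set_scope.

Definition l2norm {R : realType} {n : nat} (v : 'rV[R]_n) : R :=
  Num.sqrt (\sum_(i < n) (v ord0 i) ^+ 2).

Definition alphabar {R : realType} (beta : nat -> R) (t : nat) : R :=
  \prod_(1 <= s < t.+1) (1 - beta s).

Definition Sfwd {R : realType} {n : nat} (beta : nat -> R)
    (z0 eps : 'rV[R]_n) (t : nat) : 'rV[R]_n :=
  Num.sqrt (alphabar beta t) *: z0 + Num.sqrt (1 - alphabar beta t) *: eps.

Definition denoise {R : realType} {n : nat} (beta : nat -> R) (t : nat)
    (zt e : 'rV[R]_n) : 'rV[R]_n :=
  (Num.sqrt (alphabar beta t))^-1 *: (zt - Num.sqrt (1 - alphabar beta t) *: e).

(* generation function G(z_t, c_text, c_img) of the conditional network eps_theta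
   (time-step dependence suppressed, t fixed) *)
Definition Ggen {R : realType} {n : nat} {Ctext : Type} (beta : nat -> R) (t : nat)
    (eps_theta : 'rV[R]_n -> Ctext -> 'rV[R]_n -> 'rV[R]_n)
    (zt : 'rV[R]_n) (ctext : Ctext) (cimg : 'rV[R]_n) : 'rV[R]_n :=
  denoise beta t zt (eps_theta zt ctext cimg).

(* The joint law of (x0, eps_x) under Pr: eps_x ~ N(0, I) (iid standard normal
   coordinates) and eps_x independent of x0.  Stated on measurable boxes, which
   form a pi-system generating the Borel sets of R^n x R^n. *)
Definition std_gaussian_indep {d} {Omega : measurableType d} {R : realType} {n : nat}
    (Pr : probability Omega R) (x0 epsx : Omega -> 'rV[R]_n) : Prop :=
  (forall i, measurable_fun setT (fun w => x0 w ord0 i)) /\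
  (forall i, measurable_fun setT (fun w => epsx w ord0 i)) /\
  forall (B A : 'I_n -> set R),
    (forall i, measurable (B i)) -> (forall i, measurable (A i)) ->
    Pr [set w | forall i, B i (x0 w ord0 i) /\ A i (epsx w ord0 i)] =
    (Pr [set w | forall i, B i (x0 w ord0 i)] *
       \prod_(i < n) normal_prob 0 1 (A i))%E.

(** Both one-step estimates [G = G(x_t, c_y, x_0)] and [G'], computed with the
    pre-trained network [eps_star], denoise the same [x_t], so they differ by
    [sqrt((1 - abar_t) / abar_t)] times the difference of the predicted
    noises.  By the Lipschitz bound, [|P(G') - P(G)|] is thus at most the
    integrand of [L_self]; integrating gives [- E P(G) <= E[...] - E P(G')],
    and the constant [- E P(G')] does not involve [eps_theta]. *)

From HB Require Import structures.
From mathcomp Require Import all_boot all_order all_algebra.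
From mathcomp Require Import all_classical all_reals all_analysis.
From mathcomp Require Import normal_distribution.
From mathcomp Require Import measurable_realfun lra.
Import Order.TTheory GRing.Theory Num.Theory.
Local Open Scope ring_scope.
Local Open Scope classical_set_scope.

Section integral_comparison.
Local Open Scope ereal_scope.
Context d (T : measurableType d) (R : realType) (mu : {measure set T -> \bar R}).

Lemma le_integral_measurable (D : set T) (f g : T -> \bar R) : measurable D ->
  measurable_fun D f -> measurable_fun D g -> {in D, forall x, f x <= g x} ->
  \int[mu]_(x in D) f x <= \int[mu]_(x in D) g x.
Proof.
move=> mD mf mg fg; rewrite integralE [leRHS]integralE leeB//.
- apply: ge0_le_integral => //; [exact: measurable_funepos..|].
  by move=> x /mem_set; exact: funepos_le.
- apply: ge0_le_integral => //; [exact: measurable_funeneg..|].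
  by move=> x /mem_set; exact: funeneg_le.
Qed.

Lemma oppe_integral_le_dist (f g h : T -> R) :
  mu.-integrable setT (EFin \o h) ->
  measurable_fun setT f -> measurable_fun setT g ->
  (forall x, `|h x - f x| <= g x)%R ->
  (- \int[mu]_x (f x)%:E) <= \int[mu]_x (g x)%:E - \int[mu]_x (h x)%:E.
Proof.
move=> hint mf mg hfg.
have hfin := integrable_fin_num measurableT hint.
have [->|gfin] := eqVneq (\int[mu]_x (g x)%:E) +oo.
  by rewrite addye ?leey//; move: hfin; rewrite -fin_numN => /fin_numP[].
have g0 x : (0 <= g x)%R by exact: le_trans (normr_ge0 _) (hfg x).
have gint : mu.-integrable setT (EFin \o g).
  apply/integrableP; split; first exact/measurable_EFinP.
  under eq_integral => x _ do rewrite gee0_abs ?lee_fin//.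
  by rewrite ltey.
have mh : measurable_fun setT h by case/integrableP: hint => /measurable_EFinP.
have hgf : \int[mu]_x (h x)%:E - \int[mu]_x (g x)%:E <= \int[mu]_x (f x)%:E.
  rewrite -integralB_EFin//; apply: le_integral_measurable => //.
  - exact/measurable_EFinP/measurable_funB.
  - exact/measurable_EFinP.
  - by move=> x _; rewrite lee_fin; have /ler_normlP[] := hfg x; lra.
by rewrite leeNl fin_num_oppeB// addeC.
Qed.
End integral_comparison.

Section denoising.
Variables (R : realType) (n : nat).

Lemma l2normZ (c : R) (v : 'rV[R]_n) : l2norm (c *: v) = `|c| * l2norm v.
Proof.
rewrite /l2norm; under eq_bigr => i _ do rewrite mxE exprMn.
by rewrite -mulr_sumr sqrtrM ?sqr_ge0// sqrtr_sqr.
Qed.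

(* No side condition (hence no use of the schedule hypotheses below):
   [Num.sqrt] vanishes on negatives and [0^-1 = 0]. *)
Lemma sqrtr_1Bdiv (a : R) :
  Num.sqrt ((1 - a) / a) = (Num.sqrt a)^-1 * Num.sqrt (1 - a).
Proof.
have [a1|a1] := lerP 0 (1 - a); last first.
  by rewrite (ltr0_sqrtr a1) mulr0 ltr0_sqrtr// pmulr_llt0// invr_gt0; lra.
rewrite sqrtrM// mulrC; have [a0|a0] := lerP 0 a; first by rewrite sqrtrV.
by rewrite ltr0_sqrtr ?invr_lt0// (ltr0_sqrtr a0) invr0 !mul0r.
Qed.

Lemma l2norm_denoiseB (beta : nat -> R) (t : nat) (z e1 e2 : 'rV[R]_n) :
  l2norm (denoise beta t z e1 - denoise beta t z e2) =
  Num.sqrt ((1 - alphabar beta t) / alphabar beta t) * l2norm (e2 - e1).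
Proof.
rewrite /denoise -scalerBr opprB addrC addrA subrK -scalerBr scalerA.
by rewrite l2normZ sqrtr_1Bdiv ger0_norm// mulr_ge0 ?invr_ge0 ?sqrtr_ge0.
Qed.

End denoising.

Theorem proposition2
  (R : realType) (n : nat) (Ctext : Type)
  (T : nat) (beta : nat -> R)
  (hbeta : forall s, (1 <= s <= T)%N -> 0 < beta s < 1)
  (t : nat) (ht : (1 <= t <= T)%N)
  (eps_star : 'rV[R]_n -> Ctext -> 'rV[R]_n)
  (P : 'rV[R]_n -> Ctext -> R) (L : R)
  (hP : forall c z1 z2, `|P z1 c - P z2 c| <= L * l2norm (z1 - z2))
  (c_y : Ctext)
  (d : measure_display) (Omega : measurableType d) (Pr : probability Omega R)
  (x0 epsx : Omega -> 'rV[R]_n)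
  (hlaw : std_gaussian_indep Pr x0 epsx)
  (hconst : Pr.-integrable setT (fun w =>
     (P (denoise beta t (Sfwd beta (x0 w) (epsx w) t)
           (eps_star (Sfwd beta (x0 w) (epsx w) t) c_y)) c_y)%:E)) :
  exists C : R,
    forall eps_theta : 'rV[R]_n -> Ctext -> 'rV[R]_n -> 'rV[R]_n,
      measurable_fun setT (fun w =>
        P (Ggen beta t eps_theta (Sfwd beta (x0 w) (epsx w) t) c_y (x0 w)) c_y) ->
      measurable_fun setT (fun w =>
        l2norm (eps_theta (Sfwd beta (x0 w) (epsx w) t) c_y (x0 w)
                - eps_star (Sfwd beta (x0 w) (epsx w) t) c_y)) ->
      (- (\int[Pr]_w
           (P (Ggen beta t eps_theta (Sfwd beta (x0 w) (epsx w) t) c_y (x0 w)) c_y)%:E)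
       <= \int[Pr]_w
           (L * Num.sqrt ((1 - alphabar beta t) / alphabar beta t)
              * l2norm (eps_theta (Sfwd beta (x0 w) (epsx w) t) c_y (x0 w)
                        - eps_star (Sfwd beta (x0 w) (epsx w) t) c_y))%:E
          + C%:E)%E.
Proof.
set zt := fun w => Sfwd beta (x0 w) (epsx w) t.
exists (- fine (\int[Pr]_w
  (P (denoise beta t (zt w) (eps_star (zt w) c_y)) c_y)%:E))%R.
move=> eps_theta mG mN.
rewrite EFinN fineK ?(integrable_fin_num measurableT hconst)//.
apply: oppe_integral_le_dist => //; first exact: measurable_funM.
move=> w; apply: le_trans (hP _ _ _) _.
by rewrite l2norm_denoiseB mulrA.
Qed.
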